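(* Let $\mathcal{X}=[0,r]^d$ and let $f:\mathcal{X}\to\mathbb{R}$ be continuous with a unique maximizer $\bm{x}^*$, and suppose $c_{\mathrm{gap}}>0$ is such that $f(\bm{x}^* )>f(\tilde{\bm{x}})+c_{\mathrm{gap}}$ for every local maximizer $\tilde{\bm{x}}\neq\bm{x}^*$ of $f$ on $\mathcal{X}$. Then: (i) If $c_{\mathrm{lin}},\rho_{\mathrm{lin}}>0$ satisfy $f(\bm{x})\le f(\bm{x}^* )-c_{\mathrm{lin}}\|\bm{x}^*-\bm{x}\|_2$ for all $\bm{x}\in\mathcal{B}_2(\rho_{\mathrm{lin}};\bm{x}^* )$, then every $\bm{x}\in\mathcal{X}$ with $f(\bm{x}^* )-f(\bm{x})\le\varepsilon_1$, where $\varepsilon_1=\min\{c_{\mathrm{gap}},c_{\mathrm{lin}}\rho_{\mathrm{lin}}\}$, belongs to $\mathcal{B}_2(\rho_{\mathrm{lin}};\bm{x}^* )$. (ii) If $c_{\mathrm{quad}},\rho_{\mathrm{quad}}>0$ satisfy $f(\bm{x})\le f(\bm{x}^* )-c_{\mathrm{quad}}\|\bm{x}^*-\bm{x}\|_2^2$ for all $\bm{x}\in\mathcal{B}_2(\rho_{\mathrm{quad}};\bm{x}^* )$, then every $\bm{x}\in\mathcal{X}$ with $f(\bm{x}^* )-f(\bm{x})\le\varepsilon_2$, where $\varepsilon_2=\min\{c_{\mathrm{gap}},c_{\mathrm{quad}}\rho_{\mathrm{quad}}^2\}$, belongs to $\mathcal{B}_2(\rho_{\mathrm{quad}};\bm{x}^*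 )$.
   Context: $\mathcal{B}_2(\rho;\bm{x}^* )=\{\bm{x}\in\mathcal{X}:\|\bm{x}-\bm{x}^*\|_2\le\rho\}$. *)

From HB Require Import structures.
From mathcomp Require Import all_boot all_order all_algebra.
From mathcomp Require Import all_classical all_reals all_analysis.
Set Implicit Arguments. Unset Strict Implicit. Unset Printing Implicit Defensive.
Import Order.TTheory GRing.Theory Num.Theory.
Import numFieldNormedType.Exports.
Local Open Scope classical_set_scope.
Local Open Scope ring_scope.

Section Defs.
Variables (R : realType) (d : nat).

Definition norm2 (v : 'rV[R]_d) : R := Num.sqrt (\sum_(i < d) (v ord0 i) ^+ 2).

Definition cube (r : R) : set 'rV[R]_d :=
  [set x | forall i : 'I_d, 0 <= x ord0 i <= r].

Definition ball2 (X : set 'rV[R]_d) (rho : R) (xs : 'rV[R]_d) : set 'rV[R]_d :=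
  [set x | X x /\ norm2 (x - xs) <= rho].

Definition unique_maximizer (X : set 'rV[R]_d) (f : 'rV[R]_d -> R) (xs : 'rV[R]_d) :=
  X xs /\ forall x, X x -> x <> xs -> f x < f xs.

Definition local_maximizer (X : set 'rV[R]_d) (f : 'rV[R]_d -> R) (xt : 'rV[R]_d) :=
  X xt /\ exists2 delta : R, 0 < delta &
    forall y, X y -> norm2 (y - xt) < delta -> f y <= f xt.
End Defs.

From HB Require Import structures.
From mathcomp Require Import all_boot all_order all_algebra.
From mathcomp Require Import all_classical all_reals all_analysis.
From mathcomp Require Import lra.
Import Order.TTheory GRing.Theory Num.Theory.
Import numFieldNormedType.Exports.
Local Open Scope classical_set_scope.
Local Open Scope ring_scope.
Set Implicit Arguments. Unset Strict Implicit. Unset Printing Implicit Defensive.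

(* Let x lie outside the closed ball of radius rho around xs with
   f xs - f x <= eps.  Maximise f over the compact set K of points of X at
   distance >= rho from xs.  The growth condition gives f <= f xs - eps on
   the sphere, so if the maximiser found lies on the sphere then x itself is
   a maximiser; either way some maximiser z of f on K lies strictly outside
   the ball.  Such a z is a local maximiser of f on X other than xs, whence
   f xs > f z + cgap >= f x + cgap >= f xs - eps + cgap >= f xs, absurd when
   eps <= cgap. *)

Section Norm2.
Variables (R : realType) (d : nat).
Implicit Types (u v : 'rV[R]_d).

Lemma norm2_distC u v : norm2 (u - v) = norm2 (v - u).
Proof. by congr Num.sqrt; apply: eq_bigr => i _; rewrite !mxE -sqrrN opprB. Qed.

Lemma norm20 : norm2 (0 : 'rV[R]_d) = 0.
Proof. by rewrite /norm2 big1 ?sqrtr0 // => i _; rewrite mxE expr0n. Qed.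

Lemma coord_le_norm2 v i : `|v ord0 i| <= norm2 v.
Proof.
rewrite -sqrtr_sqr ler_sqrt ?sumr_ge0// => [|j _]; last exact: sqr_ge0.
by rewrite (bigD1 i) //= lerDl sumr_ge0// => j _; exact: sqr_ge0.
Qed.

Lemma continuous_norm2 : continuous (@norm2 R d).
Proof.
move=> v; apply: (continuous_comp _ (@sqrt_continuous R _)).
apply: continuous_big => [|i _ u]; first exact: add_continuous.
apply: (@continuous_comp _ _ _ (fun x : 'rV[R]_d => x ord0 i) (fun t => t ^+ 2)).
  exact: coord_continuous.
exact: exprn_continuous.
Qed.

Lemma continuous_norm2_sub (xs : 'rV[R]_d) :
  continuous (fun y : 'rV[R]_d => norm2 (y - xs)).
Proof.
move=> y; apply: (@continuous_comp _ _ _ (fun y : 'rV[R]_d => y - xs) (@norm2 R d)).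
  by apply: continuousB; [exact: cvg_id | exact: cst_continuous].
exact: continuous_norm2.
Qed.

Lemma nbhs_norm2 u (A : set 'rV[R]_d) :
  nbhs u A -> exists2 e : R, 0 < e & forall v, norm2 (v - u) < e -> A v.
Proof.
move=> /nbhs_ballP[e e0 eA]; exists e => // v uv; apply: eA; split => // i j.
rewrite (ord1 i) /ball /= distrC.
by apply: le_lt_trans uv; have := coord_le_norm2 (v - u) j; rewrite !mxE.
Qed.

End Norm2.

Section GapSublevel.
Variables (R : realType) (d : nat) (X : set 'rV[R]_d) (f : 'rV[R]_d -> R).
Variables (xs : 'rV[R]_d) (cgap : R).
Hypothesis X_compact : compact X.
Hypothesis f_cont : {within X, continuous f}.
Hypothesis gap : forall xt, local_maximizer X f xt -> xt <> xs -> f xs > f xt + cgap.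

Lemma local_maximizer_off_ball (rho : R) (z : 'rV[R]_d) :
  X z -> rho < norm2 (z - xs) ->
  (forall y, X y -> rho <= norm2 (y - xs) -> f y <= f z) ->
  local_maximizer X f z.
Proof.
move=> Xz z_out zmax; split => //.
have out_open : open [set y | rho < norm2 (y - xs)].
  by apply: open_comp (@open_gt _ rho) => y _; exact: continuous_norm2_sub.
have [e e0 eout] := nbhs_norm2 (open_nbhs_nbhs (conj out_open z_out)).
by exists e => // y Xy /eout /ltW; exact: zmax.
Qed.

Lemma gap_sublevel_in_ball (eps rho : R) :
  0 < rho -> eps <= cgap ->
  (forall y, X y -> norm2 (y - xs) = rho -> f y <= f xs - eps) ->
  forall x, X x -> f xs - f x <= eps -> norm2 (x - xs) <= rho.
Proof.
move=> rho0 eps_gap sphere x Xx fx; rewrite leNgt; apply/negP => x_out.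
pose K := X `&` [set y | rho <= norm2 (y - xs)].
have Kx : K x by split => //; exact: ltW.
have [c Kc cmax] : exists2 c, c \in K & forall t, t \in K -> f t <= f c.
  apply: EVT_max_rV; first by exists x.
    apply: compact_closedI => //.
    by apply: (continuous_closedP _).1 (@closed_ge _ rho); exact: continuous_norm2_sub.
  by apply: continuous_subspaceW f_cont; exact: subIsetl.
have [Xc c_out] : K c by rewrite -inE.
have [z [Xz z_out zmax]] : exists z, [/\ X z, rho < norm2 (z - xs) &
    forall y, X y -> rho <= norm2 (y - xs) -> f y <= f z].
  have {}cmax y : X y -> rho <= norm2 (y - xs) -> f y <= f c.
    by move=> Xy y_out; apply: cmax; rewrite inE.
  have [c_out'|c_in] := ltrP rho (norm2 (c - xs)); first by exists c.
  have /(sphere c Xc) fc : norm2 (c - xs) = rho by apply/eqP; rewrite eq_le c_in.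
  by exists x; split=> // y Xy /(cmax y Xy) fy; lra.
have zxs : z <> xs by move=> zE; move: z_out; rewrite zE subrr norm20; lra.
have := gap (local_maximizer_off_ball Xz z_out zmax) zxs.
have := zmax x Xx (ltW x_out); lra.
Qed.

End GapSublevel.

Lemma compact_cube (R : realType) d (r : R) : compact (cube r : set 'rV[R]_d).
Proof.
have -> : cube r = [set v : 'rV[R]_d | forall i, `[0, r]%classic (v ord0 i)].
  by apply/seteqP; split=> v vr i; have := vr i; rewrite /= in_itv.
exact: (rV_compact (fun=> @segment_compact R 0 r)).
Qed.

Theorem lemma15 (R : realType) (d : nat) (r : R) (f : 'rV[R]_d -> R)
    (xs : 'rV[R]_d) (cgap : R) :
  0 < r ->
  {within cube r, continuous f} ->
  unique_maximizer (cube r) f xs ->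
  0 < cgap ->
  (forall xt, local_maximizer (cube r) f xt -> xt <> xs -> f xs > f xt + cgap) ->
  (forall clin rholin : R, 0 < clin -> 0 < rholin ->
     (forall x, ball2 (cube r) rholin xs x -> f x <= f xs - clin * norm2 (xs - x)) ->
     forall x, cube r x -> f xs - f x <= Num.min cgap (clin * rholin) ->
       ball2 (cube r) rholin xs x)
  /\
  (forall cquad rhoquad : R, 0 < cquad -> 0 < rhoquad ->
     (forall x, ball2 (cube r) rhoquad xs x ->
        f x <= f xs - cquad * norm2 (xs - x) ^+ 2) ->
     forall x, cube r x -> f xs - f x <= Num.min cgap (cquad * rhoquad ^+ 2) ->
       ball2 (cube r) rhoquad xs x).
Proof.
move=> _ f_cont _ _ gap.
have sublevel_in_ball := gap_sublevel_in_ball (@compact_cube R d r) f_cont gap.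
have min_le_gap a : Num.min cgap a <= cgap by rewrite ge_min lexx.
have min_le a : Num.min cgap a <= a by rewrite ge_min lexx orbT.
split=> c rho _ rho0 growth x Xx fx; split=> //;
  apply: (sublevel_in_ball _ _ rho0 (min_le_gap _) _ x Xx fx) => y Xy y_sphere;
  (have /growth : ball2 (cube r) rho xs y by split; rewrite ?y_sphere);
  by rewrite norm2_distC y_sphere => /le_trans->; rewrite // lerD2l lerN2 min_le.
Qed.
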